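(* In the setting of the context, assume (G1), (G2') and ($\overline G{}_3'$), and let $\tilde\rho$ be a metric on $X$ inducing its topology, with constants $\gamma\ge1$, $C\ge1$ such that $C^{-1}\tilde\rho(x,y)^{-\gamma}\le\tilde G(x,y)\le C\tilde\rho(x,y)^{-\gamma}$ for all $x,y$. Then there exists $\tilde c_2\ge1$ such that $$\widetilde{\operatorname{cap}}\,\tilde U(x,r)\ \ge\ \tilde c_2^{-1}\,r^{\gamma}\qquad\text{for all }x\in X_0,\ 0<r<\tilde R_0(x).$$
   Context: $(X,\rho)$ separable metric space, $X_0\subsetneq X$ open. $\mathcal M(X)$ finite Borel measures (extended to universally measurable sets), $\|\mu\|=\mu(X)$. For every open $U\subseteq X$ and $x\in X$ a measure $\mu_x^U\in\mathcal M(X)$ is given such that for all open $U,V$ and $x$: $\mu_x^U(U)=0$, $\|\mu_x^U\|\le1$, $\mu_x^U=\varepsilon_x$ (Dirac) if $x\notin U$; $y\mapsto\mu_y^U(E)$ universally measurable for Borel $E$; $\mu_x^U=\int\mu_y^U\,d\mu_x^V(y)$ if $V\subseteq U$. For closed $A$, $\varepsilon_x^A:=\mu_x^{X\setminus A}$. $\mathcal U(X_0)$: open $U$ with $\overline U\subseteq X_0$. $G\colon X\times X\to(0,\infty]$ Borel, $G\nu(x)=\int G(x,y)d\nu(y)$; $V(x,s):=\{y:G(y,x)^{-1}<s\}$; $S_0(x):=\sup\{s>0:\overline{V(x,s)}\subseteq X_0\}$. $\tilde U(x,r):=\{y:\tilde\rho(x,y)<r\}$, $\tilde R_0(x):=\sup\{r>0:\overline{\tilde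 U(x,r)}\subseteq X_0\}$. For universally measurable $A$, $\widetilde{\operatorname{cap}}A:=\sup\{\|\mu\|:\mu\in\mathcal M(X),\ \mu(X\setminus A)=0,\ \int\tilde G(\cdot,y)\,d\mu(y)\le1\}$. (G1): there is $c_1\ge1$ such that for all $U\in\mathcal U(X_0)$, $x\in U$, $\delta>0$, closed $A\subseteq U$ there are a closed neighborhood $B\subseteq U$ of $A$ and a measure $\nu$ carried by $B$ with $\|\varepsilon_x^B\|-\delta<c_1\|\varepsilon_x^A\|$ and $\|\varepsilon_y^A\|\le G\nu(y)\le c_1\|\varepsilon_y^B\|$ for all $y$. (G2'): for every $x$, $G(x,x)=\lim_{y\to x}G(y,x)=\infty$; there is a Borel $w$ with $0<w\le1$ and $\int w\,d\mu_x^U\le w(x)$ for all open $U$, $x$; there is $\tilde c>1$ with $\tilde G(x,z)\wedge\tilde G(y,z)\le\tilde c\tilde G(x,y)$ for all $x,y,z$, where $\tilde G(x,y):=G(x,y)/(w(x)w(y))$; $\lambda:=\inf w(X_0)>0$; for each $x$ and neighborhood $V$ of $x$, $G(\cdot,x)/w$ is bounded on $X\setminus V$. ($\overline G{}_3'$): there is $c_3\ge1$ with $\|\varepsilon_y^{\overline{V(x,s)}}\|\ge c_3^{-1}sG(y,x)$ for all $x\in X_0$, $0<s<S_0(x)$, $y\in X\setminus V(x,s)$. *)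

From HB Require Import structures.
From mathcomp Require Import all_boot all_order all_algebra.
From mathcomp Require Import all_classical all_reals all_analysis.
From mathcomp Require Import measurable_realfun.
Set Implicit Arguments. Unset Strict Implicit. Unset Printing Implicit Defensive.
Import Order.TTheory GRing.Theory Num.Theory.
Local Open Scope classical_set_scope.
Local Open Scope ring_scope.

Section MetricDefs.
Context {R : realType} {T : Type}.

Definition is_metric (rho : T -> T -> R) : Prop :=
  [/\ forall x y, 0 <= rho x y,
      forall x y, rho x y = 0 <-> x = y,
      forall x y, rho x y = rho y x &
      forall x y z, rho x z <= rho x y + rho y z].

Definition mball (rho : T -> T -> R) (x : T) (r : R) : set T :=
  [set y | rho x y < r].

Definition mopen (rho : T -> T -> R) (U : set T) : Prop :=
  forall x, U x -> exists2 e : R, 0 < e & mball rho x e `<=` U.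

Definition mclosure (rho : T -> T -> R) (A : set T) : set T :=
  [set x | forall e : R, 0 < e -> exists2 a, A a & rho x a < e].

Definition mclosed (rho : T -> T -> R) (A : set T) : Prop :=
  mclosure rho A `<=` A.

Definition minterior (rho : T -> T -> R) (A : set T) : set T :=
  [set x | exists2 e : R, 0 < e & mball rho x e `<=` A].

Definition mseparable (rho : T -> T -> R) : Prop :=
  exists D : set T, countable D /\
    forall x (e : R), 0 < e -> exists2 d, D d & rho x d < e.

Definition UX0 (rho : T -> T -> R) (X0 U : set T) : Prop :=
  mopen rho U /\ mclosure rho U `<=` X0.

End MetricDefs.

Notation XB rho := (g_sigma_algebraType (mopen rho)).

Local Open Scope ereal_scope.

Section MeasDefs.
Context {R : realType} {T : pointedType} (rho : T -> T -> R).

Definition mass (nu : {finite_measure set XB rho -> \bar R}) : \bar R := nu setT.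

(** universal measurability of a function: measurable w.r.t. the completion
    (Caratheodory extension) of every finite Borel measure *)
Definition umeas_fun (f : T -> \bar R) : Prop :=
  forall nu : {finite_measure set XB rho -> \bar R},
    measurable_fun [set: caratheodory_type (nu^*)%mu] f.


Definition cint (nu : {finite_measure set XB rho -> \bar R}) (f : T -> \bar R)
  : \bar R := \int[@completed_measure_extension _ _ _ nu]_y f y.

Definition kernel_family
  (mu : set T -> T -> {finite_measure set XB rho -> \bar R}) : Prop :=
  forall (U : set T) (x : T), mopen rho U ->
    [/\ mu U x U = 0,
        mass (mu U x) <= 1,
        (~ U x -> forall E : set (XB rho), measurable E -> mu U x E = @dirac _ (XB rho) x R E),
        (forall E : set (XB rho), measurable E -> umeas_fun (fun y => mu U y E)) &
        (forall V : set T, mopen rho V -> V `<=` U ->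
           forall E : set (XB rho), measurable E ->
             mu U x E = cint (mu V x) (fun y => mu U y E))].

Definition eps (mu : set T -> T -> {finite_measure set XB rho -> \bar R})
  (A : set T) (x : T) := mu (~` A) x.

Definition Gpot (G : T -> T -> \bar R) (nu : {finite_measure set XB rho -> \bar R})
  (x : T) : \bar R := \int[nu]_y G x y.

End MeasDefs.

Section GDefs.
Context {R : realType} {T : Type}.

(** inverse on (0, +oo], with +oo^-1 = 0 *)
Definition einv (e : \bar R) : \bar R :=
  match e with
  | r%:E => (r^-1)%:E
  | _ => 0
  end.

Definition Gt (G : T -> T -> \bar R) (w : T -> R) (x y : T) : \bar R :=
  G x y * ((w x * w y)^-1)%:E.

Definition Vset (G : T -> T -> \bar R) (x : T) (s : R) : set T :=
  [set y | einv (G y x) < s%:E].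

Definition S0 (rho : T -> T -> R) (G : T -> T -> \bar R) (X0 : set T) (x : T)
  : \bar R :=
  ereal_sup [set s%:E | s in [set s : R | (0 < s)%R /\
                                 mclosure rho (Vset G x s) `<=` X0]].

Definition R0t (rhot : T -> T -> R) (X0 : set T) (x : T) : \bar R :=
  ereal_sup [set r%:E | r in [set r : R | (0 < r)%R /\
                                 mclosure rhot (mball rhot x r) `<=` X0]].

Definition rpowneg (d gam : R) : \bar R :=
  if d == 0%R then +oo else (d `^ (- gam))%:E.

End GDefs.

Section Hyps.
Context {R : realType} {T : pointedType} (rho : T -> T -> R).

Definition G1 (mu : set T -> T -> {finite_measure set XB rho -> \bar R})
  (G : T -> T -> \bar R) (X0 : set T) : Prop :=
  exists c1 : R, (1 <= c1)%R /\
    forall (U : set T) (x : T) (delta : R) (A : set T),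
      UX0 rho X0 U -> U x -> (0 < delta)%R -> mclosed rho A -> A `<=` U ->
      exists (B : set T) (nu : {finite_measure set XB rho -> \bar R}),
        [/\ mclosed rho B, A `<=` minterior rho B, B `<=` U,
            nu (~` B) = 0 &
            mass (eps mu B x) - delta%:E < c1%:E * mass (eps mu A x)] /\
            (forall y, mass (eps mu A y) <= Gpot G nu y /\
                      Gpot G nu y <= c1%:E * mass (eps mu B y)).

Definition G2' (mu : set T -> T -> {finite_measure set XB rho -> \bar R})
  (G : T -> T -> \bar R) (w : T -> R) (X0 : set T) : Prop :=
  [/\ (forall x, G x x = +oo) /\
      (forall x (M : R), exists2 e : R, (0 < e)%R &
          forall y, (rho y x < e)%R -> M%:E < G y x),
      measurable_fun [set: XB rho] w /\ (forall x, (0 < w x <= 1)%R),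
      (forall (U : set T) (x : T), mopen rho U ->
          \int[mu U x]_y (w y)%:E <= (w x)%:E),
      (exists ct : R, (1 < ct)%R /\
          forall x y z, Order.min (Gt G w x z) (Gt G w y z) <= ct%:E * Gt G w x y) /\
      (exists2 lam : R, (0 < lam)%R & forall x, X0 x -> (lam <= w x)%R) &
      (forall x (V : set T), minterior rho V x ->
          exists M : R, forall y, ~ V y -> G y x * ((w y)^-1)%:E <= M%:E)].

Definition G3bar' (mu : set T -> T -> {finite_measure set XB rho -> \bar R})
  (G : T -> T -> \bar R) (X0 : set T) : Prop :=
  exists c3 : R, (1 <= c3)%R /\
    forall (x : T) (s : R) (y : T),
      X0 x -> (0 < s)%R -> s%:E < S0 rho G X0 x -> ~ Vset G x s y ->
      (c3^-1 * s)%:E * G y x <= mass (eps mu (mclosure rho (Vset G x s)) y).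

Definition capt (G : T -> T -> \bar R) (w : T -> R) (A : set T) : \bar R :=
  ereal_sup [set mass nu | nu in
    [set nu : {finite_measure set XB rho -> \bar R} |
       nu (~` A) = 0 /\ forall x, \int[nu]_y Gt G w x y <= 1]].

End Hyps.

From HB Require Import structures.
From mathcomp Require Import all_boot all_order all_algebra.
From mathcomp Require Import all_classical all_reals all_analysis.
From mathcomp Require Import measurable_realfun.
From mathcomp Require Import ring lra.
Import Order.TTheory GRing.Theory Num.Theory.
Local Open Scope classical_set_scope.
Local Open Scope ring_scope.

(* Fix x and r, put t := r/(ct C^2) and s := (t/2)^gam/(2C), so that the set
   V(x,2s) lies in the ball of radius t/2.  Apply (G1) to A = closure V(x,s)
   inside U = B~(x,t) and test the resulting measure nu at a point y0 outside
   X0, far from x.  By the quasi-metric inequality for G~, G(y0,z) is at most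
   (ct/lam) G(y0,x) on the carrier of nu, so (G3') and (G1) give
     c3^-1 s G(y0,x) <= ||eps_y0^A|| <= G nu(y0) <= (ct/lam) G(y0,x) ||nu||,
   i.e. ||nu|| >~ s ~ r^gam.  Conversely, supermedianity of w yields
   ||eps_z^B|| <= w(z)/lam, so (lam^2/c1) nu has G~-potential at most 1 and is
   admissible for the capacity of B~(x,r). *)

Section MetricFacts.
Context {R : realType} {T : Type}.
Implicit Types (d : T -> T -> R) (A B : set T).

Lemma mball_center {d x e} : is_metric d -> 0 < e -> mball d x e x.
Proof. by case=> _ d0 _ _ e0; rewrite /mball/= (proj2 (d0 x x)). Qed.

Lemma mball_open {d x e} : is_metric d -> mopen d (mball d x e).
Proof.
case=> _ _ _ dT y; rewrite /mball/= => ye.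
exists (e - d x y); first by rewrite subr_gt0.
by move=> z; rewrite /mball/= ltrBrDl => hz; apply: le_lt_trans (dT x y z) _.
Qed.

Lemma sub_mclosure {d A} : is_metric d -> A `<=` mclosure d A.
Proof. by move=> dm y Ay e e0; exists y => //; apply: mball_center. Qed.

Lemma mclosureS {d A B} : A `<=` B -> mclosure d A `<=` mclosure d B.
Proof. by move=> AB y hy e /hy[a /AB]; exists a. Qed.

Lemma mclosure_mball {d x e} :
  is_metric d -> mclosure d (mball d x e) `<=` [set y | d x y <= e].
Proof.
case=> _ _ dC dT y hy /=; apply/ler_addgt0Pr => r r0.
have [a xa ya] := hy r r0; apply: le_trans (dT x a y) _.
by rewrite (dC a y); apply: lerD; apply: ltW.
Qed.

Lemma mclosure_closed {d A} : is_metric d -> mclosed d (mclosure d A).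
Proof.
case=> _ _ _ dT y hy e e0; have e20 : 0 < e / 2 by rewrite divr_gt0.
have [a ha ya] := hy _ e20; have [b Ab ab] := ha _ e20.
by exists b => //; apply: le_lt_trans (dT y a b) _; rewrite (splitr e) ltrD.
Qed.

Lemma mclosure_sub_coarser {d} {d' : T -> T -> R} {A} : is_metric d' ->
  (forall U, mopen d' U -> mopen d U) -> mclosure d A `<=` mclosure d' A.
Proof.
move=> d'm d'd y hy e e0.
have [r r0 hr] := d'd _ (mball_open d'm) y (mball_center d'm e0).
by have [a Aa /hr ya] := hy r r0; exists a.
Qed.

Lemma mclosed_openC {d A} : mclosed d A -> mopen d (~` A).
Proof.
move=> Acl y nAy; apply: contrapT => hn; apply/nAy/Acl => e e0.
apply: contrapT => hne; apply: hn; exists e => // z /= yz Az.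
by apply: hne; exists z.
Qed.

End MetricFacts.

Local Open Scope ereal_scope.

Section MeasureFacts.
Context {R : realType} {T : pointedType} {rho : T -> T -> R}.
Implicit Types (A B U : set T) (nu : {finite_measure set XB rho -> \bar R}).

Lemma mopen_measurable {U} : mopen rho U -> @measurable _ (XB rho) U.
Proof. exact: sub_sigma_algebra. Qed.

Lemma mclosed_measurable {A} : mclosed rho A -> @measurable _ (XB rho) A.
Proof.
by move=> /mclosed_openC/mopen_measurable/measurableC; rewrite setCK.
Qed.

Lemma le_integral_carrier {nu B} {f g : T -> \bar R} :
  @measurable _ (XB rho) B -> nu (~` B) = 0 ->
  measurable_fun [set: XB rho] f -> measurable_fun [set: XB rho] g ->
  (forall y, 0 <= f y) -> (forall y, 0 <= g y) -> (forall y, B y -> f y <= g y) ->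
  \int[nu]_y f y <= \int[nu]_y g y.
Proof.
move=> mB nuB mf mg f0 g0 fg; apply: ae_ge0_le_integral => //.
exists (~` B); split => //; first exact: measurableC.
by move=> y /= + By; apply=> _; apply: fg.
Qed.

Lemma measurable_section (G : T -> T -> \bar R) z :
  measurable_fun [set: (XB rho * XB rho)%type] (fun p => G p.1 p.2) ->
  measurable_fun [set: XB rho] (G z).
Proof.
by move=> mG; apply: measurableT_comp mG (@pair1_measurable _ _ (XB rho) (XB rho) z).
Qed.

Lemma measurable_Gt_section (G : T -> T -> \bar R) (w : T -> R) z :
  measurable_fun [set: (XB rho * XB rho)%type] (fun p => G p.1 p.2) ->
  measurable_fun [set: XB rho] w -> (forall x, (0 < w x)%R) ->
  measurable_fun [set: XB rho] (Gt G w z).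
Proof.
move=> mG mw w0; apply: emeasurable_funM; first exact: measurable_section.
apply/measurable_EFinP.
have -> : (fun y => (w z * w y)^-1)%R = (fun y => (w z * w y) `^ (-1))%R.
  by apply/funext => y; rewrite powR_inv1 // mulr_ge0 // ltW.
apply: measurableT_comp (measurable_powR _) _.
by apply: measurable_funM => //; exact: measurable_cst.
Qed.

End MeasureFacts.

Section PowerFacts.
Context {R : realType}.

Lemma rpowneg_le (d r g : R) :
  (0 <= g)%R -> (0 < r)%R -> (r <= d)%R -> rpowneg d g <= (r `^ (- g))%:E.
Proof.
move=> g0 r0 rd; have dp : (0 < d)%R by apply: lt_le_trans rd.
rewrite /rpowneg gt_eqF // lee_fin !powRN lef_pV2 ?posrE ?powR_gt0 //.
by apply: ge0_ler_powR; rewrite // nnegrE ltW.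
Qed.

Lemma lt_rpowneg (d t g : R) :
  (0 < g)%R -> (0 <= d)%R -> (d < t)%R -> (t `^ (- g))%:E < rpowneg d g.
Proof.
move=> g0 d0 dt; rewrite /rpowneg; case: ifPn => [_|dn0]; first exact: ltry.
have dp : (0 < d)%R by rewrite lt0r dn0.
have tp : (0 < t)%R by apply: lt_trans dt.
rewrite lte_fin !powRN ltf_pV2 ?posrE ?powR_gt0 //.
by apply: gt0_ltr_powR; rewrite // nnegrE ltW.
Qed.

Lemma powRN_shrink {a g r : R} :
  (1 <= a)%R -> (1 <= g)%R -> (0 < r)%R -> (a * r `^ (- g) <= (a^-1 * r) `^ (- g))%R.
Proof.
move=> a1 g1 r0; have a0 : (0 < a)%R by apply: lt_le_trans a1.
have ai0 : (0 < a^-1)%R by rewrite invr_gt0.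
rewrite !powRN (powRM _ (ltW ai0) (ltW r0)).
rewrite -[leLHS]invrK invfM invrK lef_pV2 ?posrE ?mulr_gt0 ?powR_gt0 //.
by rewrite ler_pM2r ?powR_gt0 // ge1r_powR // ai0 invf_le1.
Qed.

End PowerFacts.

Section WeightedKernel.
Context {R : realType} {T : Type} {G : T -> T -> \bar R} {w : T -> R}.
Hypothesis w_range : forall x, (0 < w x <= 1)%R.

Lemma Gt_ge0 y z : (forall x y, 0 < G x y) -> 0 <= Gt G w y z.
Proof.
move=> G0; apply: mule_ge0; first exact: ltW.
have /andP[wy0 _] := w_range y; have /andP[wz0 _] := w_range z.
by rewrite lee_fin invr_ge0 ltW // mulr_gt0.
Qed.

Lemma G_eq_Gt y z : G y z = Gt G w y z * (w y * w z)%:E.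
Proof.
have /andP[wy0 _] := w_range y; have /andP[wz0 _] := w_range z.
by rewrite /Gt -muleA -EFinM mulVf ?mule1 // gt_eqF ?mulr_gt0.
Qed.

Lemma G_le_Gt y z : (forall x y, 0 < G x y) -> G y z <= Gt G w y z.
Proof.
move=> G0; have /andP[wy0 wy1] := w_range y; have /andP[wz0 wz1] := w_range z.
rewrite G_eq_Gt -[leRHS]mule1; apply: (lee_wpmul2l (Gt_ge0 _ _ G0)).
by rewrite lee_fin mulr_ile1 // ltW.
Qed.

End WeightedKernel.

Definition ball_capacity_const {R : realType} (gam C ct lam c1 c3 : R) : R :=
  lam ^+ 3 * ((ct * C ^+ 2)^-1 / 2) `^ gam / (2 * C * c1 * c3 * ct).

Lemma ball_capacity_const_gt0 {R : realType} {gam C ct lam c1 c3 : R} :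
  (0 < lam)%R -> (0 < C)%R -> (0 < ct)%R -> (0 < c1)%R -> (0 < c3)%R ->
  (0 < ball_capacity_const gam C ct lam c1 c3)%R.
Proof.
move=> *; rewrite divr_gt0 ?mulr_gt0 ?exprn_gt0 ?powR_gt0 ?divr_gt0 //.
by rewrite invr_gt0 mulr_gt0 ?exprn_gt0.
Qed.

Section CapacityOfBalls.
Context {R : realType} {T : pointedType} {rho rhot : T -> T -> R} {X0 : set T}
  {mu : set T -> T -> {finite_measure set XB rho -> \bar R}}
  {G : T -> T -> \bar R} {w : T -> R} {gam C ct lam c1 c3 : R}.

Hypothesis rho_metric : is_metric rho.
Hypothesis rhot_metric : is_metric rhot.
Hypothesis open_rho_rhot : forall U : set T, mopen rho U <-> mopen rhot U.
Hypothesis mu_kernel : kernel_family mu.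
Hypothesis G_gt0 : forall x y, 0 < G x y.
Hypothesis G_meas : measurable_fun [set: (XB rho * XB rho)%type] (fun p => G p.1 p.2).
Hypothesis w_meas : measurable_fun [set: XB rho] w.
Hypothesis w_range : forall x, (0 < w x <= 1)%R.
Hypothesis w_excessive :
  forall U x, mopen rho U -> \int[mu U x]_y (w y)%:E <= (w x)%:E.
Hypothesis ct_gt1 : (1 < ct)%R.
Hypothesis Gt_quasi :
  forall x y z, Order.min (Gt G w x z) (Gt G w y z) <= ct%:E * Gt G w x y.
Hypothesis lam_gt0 : (0 < lam)%R.
Hypothesis lam_le_w : forall x, X0 x -> (lam <= w x)%R.
Hypothesis gam_ge1 : (1 <= gam)%R.
Hypothesis C_ge1 : (1 <= C)%R.
Hypothesis Gt_bounds : forall x y,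
  (C^-1)%:E * rpowneg (rhot x y) gam <= Gt G w x y /\
  Gt G w x y <= C%:E * rpowneg (rhot x y) gam.

Hypothesis c1_ge1 : (1 <= c1)%R.
Hypothesis c3_ge1 : (1 <= c3)%R.
Hypothesis G1_c1 : forall (U : set T) (x : T) (delta : R) (A : set T),
  UX0 rho X0 U -> U x -> (0 < delta)%R -> mclosed rho A -> A `<=` U ->
  exists (B : set T) (nu : {finite_measure set XB rho -> \bar R}),
    [/\ mclosed rho B, A `<=` minterior rho B, B `<=` U,
        nu (~` B) = 0 &
        mass (eps mu B x) - delta%:E < c1%:E * mass (eps mu A x)] /\
    (forall y, mass (eps mu A y) <= Gpot G nu y /\
               Gpot G nu y <= c1%:E * mass (eps mu B y)).
Hypothesis G3_c3 : forall (x : T) (s : R) (y : T),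
  X0 x -> (0 < s)%R -> s%:E < S0 rho G X0 x -> ~ Vset G x s y ->
  (c3^-1 * s)%:E * G y x <= mass (eps mu (mclosure rho (Vset G x s)) y).

Let w_gt0 x : (0 < w x)%R. Proof. by have /andP[] := w_range x. Qed.
Let C_gt0 : (0 < C)%R. Proof. exact: lt_le_trans ltr01 C_ge1. Qed.
Let ct_gt0 : (0 < ct)%R. Proof. exact: lt_trans ltr01 ct_gt1. Qed.
Let gam_gt0 : (0 < gam)%R. Proof. exact: lt_le_trans ltr01 gam_ge1. Qed.
Let c1_gt0 : (0 < c1)%R. Proof. exact: lt_le_trans ltr01 c1_ge1. Qed.
Let c3_gt0 : (0 < c3)%R. Proof. exact: lt_le_trans ltr01 c3_ge1. Qed.

Lemma Gt_le_far y x r : (0 < r)%R -> (r <= rhot y x)%R ->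
  Gt G w y x <= (C * r `^ (- gam))%:E.
Proof.
move=> r0 ry; apply: le_trans (proj2 (Gt_bounds y x)) _; rewrite EFinM.
by apply: lee_wpmul2l; [rewrite lee_fin ltW | exact: rpowneg_le (ltW gam_gt0) r0 ry].
Qed.

Lemma Vset_sub_mball x {sig tau} : (0 < sig)%R -> (0 < tau)%R ->
  (C * sig <= tau `^ gam)%R -> Vset G x sig `<=` mball rhot x tau.
Proof.
move=> sig0 tau0 Csig y; rewrite /Vset /mball /= => Vy; rewrite ltNge; apply/negP => ty.
have [_ _ rhotC _] := rhot_metric.
have Gyx : G y x <= (sig^-1)%:E.
  apply: le_trans (G_le_Gt w_range y x G_gt0) _.
  apply: le_trans (Gt_le_far y x tau tau0 _) _; first by rewrite rhotC.
  rewrite lee_fin powRN.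
  rewrite -subr_ge0 (_ : _ - _ = (tau `^ gam - C * sig) / (sig * tau `^ gam))%R.
    by rewrite divr_ge0 ?subr_ge0 // ltW // mulr_gt0 ?powR_gt0.
  by field; rewrite !gt_eqF ?powR_gt0.
move: Vy Gyx (G_gt0 y x); case: (G y x) => [g| |] //=; rewrite !lte_fin lee_fin.
move=> Vy Gyx g0; move: Vy; rewrite -[(g^-1)%R]mul1r ltr_pdivrMr // => sg.
by move: Gyx; rewrite -[(sig^-1)%R]mul1r ler_pdivlMr //; nra.
Qed.

Lemma mclosure_Vset_sub x sig tau : (0 < sig)%R -> (0 < tau)%R ->
  (C * sig <= tau `^ gam)%R ->
  mclosure rho (Vset G x sig) `<=` [set y | (rhot x y <= tau)%R].
Proof.
move=> sig0 tau0 Csig y /(mclosure_sub_coarser rhot_metric (fun U => proj2 (open_rho_rhot U))).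
by move=> /(mclosureS (Vset_sub_mball x sig0 tau0 Csig)) /(mclosure_mball rhot_metric).
Qed.

Lemma G_le_far {x y z r t} : X0 x -> (0 < r)%R -> (0 < t)%R ->
  (ct * C ^+ 2 * r `^ (- gam) <= t `^ (- gam))%R ->
  (r <= rhot y x)%R -> (rhot x z < t)%R ->
  G y z <= (ct / lam)%:E * G y x.
Proof.
move=> X0x r0 t0 far ry xz.
have Gt_lt : ct%:E * Gt G w y x < Gt G w x z.
  apply: le_lt_trans (lee_wpmul2l _ (Gt_le_far y x r r0 ry)) _; first by rewrite lee_fin ltW.
  apply: lt_le_trans (proj1 (Gt_bounds x z)); rewrite -EFinM.
  apply: (@le_lt_trans _ _ (C^-1 * t `^ (- gam))%:E).
    rewrite lee_fin (_ : ct * _ = C^-1 * (ct * C ^+ 2 * r `^ (- gam)))%R.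
      by rewrite ler_pM2l ?invr_gt0.
    by field; rewrite gt_eqF.
  have [rhot_ge0 _ _ _] := rhot_metric.
  by rewrite EFinM lte_pmul2l ?lt_rpowneg ?lte_fin ?invr_gt0.
have Gt_yz : Gt G w y z <= ct%:E * Gt G w y x.
  (* the other branch of the quasi-metric inequality is excluded by [Gt_lt] *)
  have /orP[//|xz_le] : (Gt G w y z <= ct%:E * Gt G w y x) ||
      (Gt G w x z <= ct%:E * Gt G w y x) by rewrite -ge_min.
  by have := le_lt_trans xz_le Gt_lt; rewrite ltxx.
rewrite (G_eq_Gt w_range); apply: le_trans (lee_wpmul2r _ Gt_yz) _.
  by rewrite lee_fin mulr_ge0 // ltW.
rewrite /Gt [in leRHS]muleC muleCA -muleA -!EFinM.
apply: lee_wpmul2l; first exact: ltW.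
rewrite lee_fin (_ : ct * _ * _ = ct * (w z / w x))%R; last by field; rewrite !gt_eqF.
rewrite ler_pM2l // ler_pdivrMr // mulrC.
apply: (@le_trans _ _ 1%R); first by have /andP[] := w_range z.
by rewrite ler_pdivlMr // mul1r lam_le_w.
Qed.

Lemma mass_eps_le_weight B z : mclosed rho B -> B `<=` X0 ->
  mass (eps mu B z) <= (w z / lam)%:E.
Proof.
move=> Bcl BX0; have oB := mclosed_openC Bcl.
have [Bnull _ _ _ _] := mu_kernel _ z oB.
have lam_mass : lam%:E * mass (eps mu B z) <= (w z)%:E.
  apply: le_trans (w_excessive _ z oB); rewrite /mass /eps -integral_cst //.
  apply: (le_integral_carrier (mclosed_measurable Bcl) Bnull).
  - exact: measurable_cst.
  - exact/measurable_EFinP.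
  - by move=> y; rewrite lee_fin ltW.
  - by move=> y; rewrite lee_fin ltW.
  - by move=> y /BX0 /(lam_le_w y); rewrite lee_fin.
have fin : mass (eps mu B z) \is a fin_num by apply: fin_num_measure.
move: lam_mass; rewrite -(fineK fin) -EFinM !lee_fin => ineq.
by rewrite ler_pdivlMr // mulrC.
Qed.

Lemma Gt_potential_le B (nu : {finite_measure set XB rho -> \bar R}) z :
  mclosed rho B -> B `<=` X0 -> nu (~` B) = 0 ->
  \int[nu]_y Gt G w z y <= Gpot G nu z * ((w z * lam)^-1)%:E.
Proof.
move=> Bcl BX0 nuB; have wl0 : (0 <= (w z * lam)^-1)%R by rewrite invr_ge0 ltW ?mulr_gt0.
rewrite /Gpot -ge0_integralZr //; last by move=> y _; apply: ltW.
- apply: (le_integral_carrier (mclosed_measurable Bcl) nuB).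
  + exact: measurable_Gt_section.
  + by apply: emeasurable_funM; [exact: measurable_section|exact: measurable_cst].
  + by move=> y; apply: Gt_ge0.
  + by move=> y; apply: mule_ge0; rewrite ?lee_fin // ltW.
  + move=> y By; rewrite /Gt; apply: lee_wpmul2l; first exact: ltW.
    by rewrite lee_fin lef_pV2 ?posrE ?mulr_gt0 // ler_pM2l // (lam_le_w _ (BX0 _ By)).
- exact: measurable_section.
Qed.

Lemma capt_ge_scaled_mass {A B} {nu : {finite_measure set XB rho -> \bar R}} :
  @measurable _ (XB rho) A -> mclosed rho B -> B `<=` A -> B `<=` X0 ->
  nu (~` B) = 0 -> (forall z, Gpot G nu z <= c1%:E * mass (eps mu B z)) ->
  (lam ^+ 2 / c1)%:E * nu setT <= capt rho G w A.
Proof.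
move=> mA Bcl BA BX0 nuB pot.
have a0 : (0 <= lam ^+ 2 / c1)%R by rewrite divr_ge0 ?exprn_ge0 ?ltW.
pose nu' : {finite_measure set XB rho -> \bar R} := mscale (NngNum a0) nu.
apply: ereal_sup_ubound; exists nu' => //; split.
  rewrite /nu' /= /mscale /=; suff -> : nu (~` A) = 0 by rewrite mule0.
  apply/eqP; rewrite eq_le measure_ge0 andbT -nuB.
  apply: le_measure; rewrite ?inE; [exact: measurableC|
    exact: measurableC (mclosed_measurable Bcl)|by move=> y nAy By; exact: nAy (BA _ By)].
move=> z; rewrite /nu' ge0_integral_mscale //=; last by move=> y _; apply: Gt_ge0.
  2: exact: measurable_Gt_section.
have wl0 : (0 <= (w z * lam)^-1)%R by rewrite invr_ge0 ltW ?mulr_gt0.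
apply: le_trans (lee_wpmul2l _ (Gt_potential_le _ _ z Bcl BX0 nuB)) _; first by rewrite lee_fin.
apply: le_trans (lee_wpmul2l _ (lee_wpmul2r _ (le_trans (pot z)
  (lee_wpmul2l _ (mass_eps_le_weight _ z Bcl BX0))))) _;
  rewrite ?lee_fin ?a0 ?wl0 ?(ltW c1_gt0) //.
rewrite (_ : _ * _ = 1)%R //.
by field; rewrite !gt_eqF.
Qed.

Lemma mass_ge_far {x y B} {nu : {finite_measure set XB rho -> \bar R}} {r t s} :
  X0 x -> (0 < r)%R -> (0 < t)%R ->
  (ct * C ^+ 2 * r `^ (- gam) <= t `^ (- gam))%R -> (r <= rhot y x)%R ->
  @measurable _ (XB rho) B -> B `<=` mball rhot x t -> nu (~` B) = 0 ->
  (c3^-1 * s)%:E * G y x <= Gpot G nu y ->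
  (lam * s / (c3 * ct))%:E <= nu setT.
Proof.
move=> X0x r0 t0 far ry mB Bt nuB G3G1.
have [g Gg] : exists g, G y x = g%:E.
  have := le_trans (G_le_Gt w_range y x G_gt0) (Gt_le_far y x r r0 ry).
  by have := G_gt0 y x; case: (G y x) => [g| |] // _ _; exists g.
have g0 : (0 < g)%R by rewrite -lte_fin -Gg.
have pot_le : Gpot G nu y <= (ct / lam * g)%:E * nu setT.
  rewrite /Gpot -integral_cst //.
  apply: (le_integral_carrier mB nuB); first exact: measurable_section.
  - exact: measurable_cst.
  - by move=> z; apply: ltW.
  - by move=> z; rewrite lee_fin ltW // mulr_gt0 // divr_gt0.
  - by move=> z /Bt Bz; rewrite EFinM -Gg (G_le_far X0x r0 t0 far ry Bz).
have [m nu_m] : exists m, nu setT = m%:E.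
  by exists (fine (nu setT)); rewrite fineK // fin_num_measure.
move: (le_trans G3G1 pot_le); rewrite Gg nu_m -!EFinM !lee_fin => ineq.
rewrite ler_pdivrMr ?mulr_gt0 //.
rewrite (_ : lam * s = c3^-1 * s * g * (c3 * lam / g))%R; last first.
  by field; rewrite !gt_eqF.
rewrite (_ : m * _ = ct / lam * g * m * (c3 * lam / g))%R; last first.
  by field; rewrite !gt_eqF.
by rewrite ler_pM2r // divr_gt0 // mulr_gt0.
Qed.

Lemma G1_measure_mass_ge {x y0 r t s} :
  X0 x -> ~ X0 y0 -> (0 < r)%R -> (0 < t)%R -> (0 < s)%R ->
  (C * (2 * s) <= (t / 2) `^ gam)%R ->
  (ct * C ^+ 2 * r `^ (- gam) <= t `^ (- gam))%R -> (r <= rhot y0 x)%R ->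
  mclosure rhot (mball rhot x t) `<=` X0 ->
  exists B (nu : {finite_measure set XB rho -> \bar R}),
    [/\ mclosed rho B, B `<=` mball rhot x t, nu (~` B) = 0,
        forall z, Gpot G nu z <= c1%:E * mass (eps mu B z) &
        (lam * s / (c3 * ct))%:E <= nu setT].
Proof.
move=> X0x y0X0 r0 t0 s0 Cs far ry0 clX0.
have ballX0 : mball rhot x t `<=` X0 := subset_trans (sub_mclosure rhot_metric) clX0.
have cl2s : mclosure rho (Vset G x (2 * s)) `<=` [set y | (rhot x y <= t / 2)%R].
  exact: mclosure_Vset_sub (mulr_gt0 _ s0) (divr_gt0 t0 _) Cs.
have cl2sX0 : mclosure rho (Vset G x (2 * s)) `<=` X0.
  by move=> y /cl2s /= xy; apply: ballX0; rewrite /mball /=; lra.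
have Vs2s : Vset G x s `<=` Vset G x (2 * s).
  by move=> y /= /lt_le_trans; apply; rewrite lee_fin; lra.
set A := mclosure rho (Vset G x s); set U := mball rhot x t.
have AU : A `<=` U.
  by move=> y /(mclosureS Vs2s) /cl2s /= xy; rewrite /U /mball /=; lra.
have UX0U : UX0 rho X0 U.
  split; first by apply/open_rho_rhot/mball_open.
  by move=> y /(mclosure_sub_coarser rhot_metric (fun U => proj2 (open_rho_rhot U))) /clX0.
have sS0 : s%:E < S0 rho G X0 x.
  apply: lt_le_trans (_ : (2 * s)%:E <= _); first by rewrite lte_fin; lra.
  by apply: ereal_sup_ubound; exists (2 * s)%R => //; split; [exact: mulr_gt0|].
have [B [nu [[Bcl _ BU nuB _] pot]]] := G1_c1 U x 1 A UX0U
  (mball_center rhot_metric t0) ltr01 (mclosure_closed rho_metric) AU.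
have y0V : ~ Vset G x s y0 by move=> /Vs2s /(sub_mclosure rho_metric) /cl2sX0.
exists B, nu; split => //; first by move=> z; exact: proj2 (pot z).
apply: (mass_ge_far X0x r0 t0 far ry0 (mclosed_measurable Bcl) BU nuB).
exact: le_trans (G3_c3 x s y0 X0x s0 sS0 y0V) (proj1 (pot y0)).
Qed.

Lemma capt_mball_ge {x y0 r r'} : X0 x -> ~ X0 y0 -> (0 < r)%R -> (r < r')%R ->
  mclosure rhot (mball rhot x r') `<=` X0 ->
  (ball_capacity_const gam C ct lam c1 c3 * r `^ gam)%:E <=
    capt rho G w (mball rhot x r).
Proof.
move=> X0x y0X0 r0 rr' ballX0.
have [_ _ rhotC _] := rhot_metric.
have ball'X0 : mball rhot x r' `<=` X0 := subset_trans (sub_mclosure rhot_metric) ballX0.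
have ctC1 : (1 <= ct * C ^+ 2)%R by apply: mulr_ege1; [exact: ltW|exact: exprn_ege1].
set k := ((ct * C ^+ 2)^-1)%R; set t := (k * r)%R; set s := ((t / 2) `^ gam / (2 * C))%R.
have k0 : (0 < k)%R by rewrite invr_gt0 (lt_le_trans ltr01).
have tr : (t <= r)%R.
  by apply: ler_piMl; [exact: ltW|rewrite /k invf_le1 // (lt_le_trans ltr01)].
have t0 : (0 < t)%R by rewrite mulr_gt0.
have s0 : (0 < s)%R by rewrite divr_gt0 ?mulr_gt0 ?powR_gt0 ?divr_gt0.
have Cs : (C * (2 * s) <= (t / 2) `^ gam)%R.
  by rewrite (_ : C * (2 * s) = (t / 2) `^ gam)%R // /s; field; rewrite gt_eqF.
have ry0 : (r <= rhot y0 x)%R.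
  have : ~ (rhot x y0 < r')%R by move=> xy0; apply/y0X0/ball'X0.
  by rewrite rhotC => /negP; rewrite -leNgt; lra.
have clX0 : mclosure rhot (mball rhot x t) `<=` X0.
  by move=> y /(mclosure_mball rhot_metric) /= xy; apply: ball'X0; rewrite /mball /=; lra.
have [B [nu [Bcl Bt nuB pot mass_nu]]] := G1_measure_mass_ge X0x y0X0 r0 t0 s0 Cs
  (powRN_shrink ctC1 gam_ge1 r0) ry0 clX0.
have Bball : B `<=` mball rhot x r by move=> y /Bt; rewrite /mball /=; lra.
have BX0 : B `<=` X0.
  by move=> y /Bt; rewrite /mball /= => xy; apply: ball'X0; rewrite /mball /=; lra.
have mball_meas : @measurable _ (XB rho) (mball rhot x r).
  exact: mopen_measurable (proj2 (open_rho_rhot _) (mball_open rhot_metric)).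
apply: le_trans (capt_ge_scaled_mass mball_meas Bcl Bball BX0 nuB pot).
apply: le_trans (lee_wpmul2l _ mass_nu); last by rewrite lee_fin divr_ge0 ?exprn_ge0 // ltW.
rewrite -EFinM lee_fin le_eqVlt; apply/orP; left; apply/eqP.
rewrite /s (_ : t / 2 = k / 2 * r)%R; last by rewrite /t mulrAC.
rewrite powRM ?divr_ge0 ?ltW // /ball_capacity_const -/k.
by field; rewrite !gt_eqF.
Qed.

End CapacityOfBalls.

Local Close Scope ereal_scope.

Theorem corollary7p5 (R : realType) (T : pointedType) (rho : T -> T -> R)
  (X0 : set T) (mu : set T -> T -> {finite_measure set XB rho -> \bar R})
  (G : T -> T -> \bar R) (w : T -> R) (rhot : T -> T -> R) (gam C : R) :
  is_metric rho -> mseparable rho ->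
  mopen rho X0 -> X0 <> setT ->
  kernel_family mu ->
  (forall x y, (0 < G x y)%E) ->
  measurable_fun [set: (XB rho * XB rho)%type] (fun p => G p.1 p.2) ->
  G1 mu G X0 -> G2' mu G w X0 -> G3bar' mu G X0 ->
  is_metric rhot -> (forall U : set T, mopen rho U <-> mopen rhot U) ->
  1 <= gam -> 1 <= C ->
  (forall x y, ((C^-1)%:E * rpowneg (rhot x y) gam <= Gt G w x y)%E /\
               (Gt G w x y <= C%:E * rpowneg (rhot x y) gam)%E) ->
  exists c2 : R, 1 <= c2 /\
    forall (x : T) (r : R), X0 x -> 0 < r -> (r%:E < R0t rhot X0 x)%E ->
      ((c2^-1 * r `^ gam)%:E <= capt rho G w (mball rhot x r))%E.
Proof.
move=> rho_metric _ _ X0_neqT mu_kernel G_gt0 G_meas [c1 [c1_ge1 G1_c1]]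
  [_ [w_meas w_range] w_excessive [[ct [ct_gt1 Gt_quasi]] [lam lam_gt0 lam_le_w]] _]
  [c3 [c3_ge1 G3_c3]] rhot_metric open_rho_rhot gam_ge1 C_ge1 Gt_bounds.
set K := ball_capacity_const gam C ct lam c1 c3.
have pos (c : R) : 1 <= c -> 0 < c by apply: lt_le_trans ltr01.
have K_gt0 : 0 < K := ball_capacity_const_gt0 lam_gt0 (pos _ C_ge1) (pos _ (ltW ct_gt1))
  (pos _ c1_ge1) (pos _ c3_ge1).
exists (Num.max 1 K^-1); split; first by rewrite le_max lexx.
move=> x r X0x r0 /ereal_sup_gt[_ [r' [_ ballX0] <-]]; rewrite lte_fin => rr'.
have [y0 y0X0] : exists y0, ~ X0 y0.
  apply: contrapT => allX0; apply/X0_neqT/seteqP; split => // y _.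
  by apply: contrapT => y0X0; apply: allX0; exists y.
apply: le_trans _ (capt_mball_ge rho_metric rhot_metric open_rho_rhot mu_kernel G_gt0
  G_meas w_meas w_range w_excessive ct_gt1 Gt_quasi lam_gt0 lam_le_w gam_ge1 C_ge1
  Gt_bounds c1_ge1 c3_ge1 G1_c1 G3_c3 X0x y0X0 r0 rr' ballX0).
rewrite lee_fin ler_pM2r ?powR_gt0 // -[leRHS]invrK lef_pV2 ?posrE ?invr_gt0 //.
  by rewrite le_max lexx orbT.
by rewrite (lt_le_trans ltr01) // le_max lexx.
Qed.
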